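(* Let $G$ be a finitely generated torsion-free group and $l:G\to\mathbb{Z}^n$ a proper, $\delta$-regular, $\delta$-hyperbolic length function with $ht(\delta)=1$ and such that $G_1=\{g\in G\mid ht(l(g))\le1\}$ is a finitely generated isolated subgroup of $G$. Then $G_1$ is a torsion-free word hyperbolic group, and $G_1$ (with a word metric for a finite generating set) is quasi-isometric to $(G_1,d_l)$, where $d_l(g,h)$ is the first coordinate of $l(g^{-1}h)$.
   Context: $\mathbb{Z}^n$ carries the right lexicographic order ($a<b$ iff $a_j<b_j$ for the largest $j$ with $a_j\ne b_j$); $ht(a)$ is the largest index with $a_k\ne0$, $ht(0)=0$. Length function: $l(1)=0$, $l(g)\ge0$, $l(g^{-1})=l(g)$, $l(gh)\le l(g)+l(h)$; $c(g,h)=\tfrac12(l(g)+l(h)-l(g^{-1}h))$; $\delta$-hyperbolic: $c(f,g)\ge\min\{c(f,h),c(g,h)\}-\delta$ for all $f,g,h$; $\delta$-regular: for all $g,h$ exist $g_c,h_c,g_d,h_d$ with $l(g_c)=l(h_c)=c(g,h)$, $g=g_cg_d$, $h=h_ch_d$, $l(g)=l(g_c)+l(g_d)$, $l(h)=l(h_c)+l(h_d)$, $l(g_c^{-1}h_c)\le4\delta$. Proper: $\{g\mid l(g)\le(k,0,\dots,0)\}$ is finite for all $k\in\mathbb{N}$. Isolated subgroup $H$: $g^m\in H$ for a nonzero integer $m$ implies $g\in H$. *)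

From Stdlib Require Import ZArith List Lia.
Open Scope Z_scope.

Record is_group {G : Type} (mul : G -> G -> G) (inv : G -> G) (one : G) : Prop := {
  grp_assoc : forall x y z, mul x (mul y z) = mul (mul x y) z;
  grp_one_l : forall x, mul one x = x;
  grp_inv_l : forall x, mul (inv x) x = one }.

Fixpoint gpow {G : Type} (mul : G -> G -> G) (one : G) (g : G) (m : nat) : G :=
  match m with O => one | S m' => mul g (gpow mul one g m') end.

Definition zpow {G : Type} (mul : G -> G -> G) (inv : G -> G) (one : G) (g : G) (m : Z) : G :=
  match m with
  | Z0 => one
  | Zpos p => gpow mul one g (Pos.to_nat p)
  | Zneg p => inv (gpow mul one g (Pos.to_nat p))
  end.

Definition torsion_free {G : Type} (mul : G -> G -> G) (one : G) (P : G -> Prop) : Prop :=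
  forall g, P g -> forall m : nat, (0 < m)%nat -> gpow mul one g m = one -> g = one.

Fixpoint reach {G : Type} (mul : G -> G -> G) (inv : G -> G) (one : G)
    (S : list G) (k : nat) (x : G) : Prop :=
  match k with
  | O => x = one
  | S k' => reach mul inv one S k' x \/
            exists s y, In s S /\ reach mul inv one S k' y /\
                        (x = mul y s \/ x = mul y (inv s))
  end.

Definition generates {G : Type} (mul : G -> G -> G) (inv : G -> G) (one : G)
    (H : G -> Prop) (S : list G) : Prop :=
  (forall s, In s S -> H s) /\ (forall g, H g -> exists k, reach mul inv one S k g).

Definition fin_generated {G : Type} (mul : G -> G -> G) (inv : G -> G) (one : G)
    (H : G -> Prop) : Prop := exists S, generates mul inv one H S.

Definition is_subgroup {G : Type} (mul : G -> G -> G) (inv : G -> G) (one : G)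
    (H : G -> Prop) : Prop :=
  H one /\ (forall x y, H x -> H y -> H (mul x y)) /\ (forall x, H x -> H (inv x)).

Definition isolated {G : Type} (mul : G -> G -> G) (inv : G -> G) (one : G)
    (H : G -> Prop) : Prop :=
  forall g (m : Z), m <> 0 -> H (zpow mul inv one g m) -> H g.

Definition is_wlen {G : Type} (mul : G -> G -> G) (inv : G -> G) (one : G)
    (S : list G) (g : G) (k : nat) : Prop :=
  reach mul inv one S k g /\ forall j, reach mul inv one S j g -> (k <= j)%nat.

(* ---------- Z^n with the right lexicographic order ----------
   A vector of Z^n is a function nat -> Z; coordinate a_{i+1} is (a i),
   only indices i < n matter. *)
Definition vec := nat -> Z.
Definition vadd (a b : vec) : vec := fun i => a i + b i.
Definition vsub (a b : vec) : vec := fun i => a i - b i.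
Definition vscal (k : Z) (a : vec) : vec := fun i => k * a i.
Definition vzero : vec := fun _ => 0.
Definition veq (n : nat) (a b : vec) : Prop := forall i, (i < n)%nat -> a i = b i.

Fixpoint vcmp_aux (a b : vec) (m : nat) : comparison :=
  match m with
  | O => Eq
  | S m' => match Z.compare (a m') (b m') with
            | Eq => vcmp_aux a b m'
            | c => c
            end
  end.
Definition vcmp (n : nat) (a b : vec) : comparison := vcmp_aux a b n.
Definition vle (n : nat) (a b : vec) : Prop := vcmp n a b <> Gt.
Definition vmin (n : nat) (a b : vec) : vec :=
  match vcmp n a b with Gt => b | _ => a end.

(* ht(a): largest (1-based) index k <= n with a_k <> 0, and 0 for a = 0 *)
Fixpoint ht_aux (a : vec) (m : nat) : nat :=
  match m with
  | O => O
  | S m' => if Z.eqb (a m') 0 then ht_aux a m' else m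
  end.
Definition ht (n : nat) (a : vec) : nat := ht_aux a n.

Definition e1 (k : nat) : vec := fun i => match i with O => Z.of_nat k | _ => 0 end.

Section LF.
Context {G : Type} (mul : G -> G -> G) (inv : G -> G) (one : G) (n : nat) (l : G -> vec).

Definition length_function : Prop :=
  veq n (l one) vzero /\
  (forall g, vle n vzero (l g)) /\
  (forall g, veq n (l (inv g)) (l g)) /\
  (forall g h, vle n (l (mul g h)) (vadd (l g) (l h))).

(* 2 c(g,h) = l(g) + l(h) - l(g^{-1} h)  (doubled to stay in Z^n) *)
Definition c2 (g h : G) : vec := vsub (vadd (l g) (l h)) (l (mul (inv g) h)).

Definition hyperbolic_lf (delta : vec) : Prop :=
  forall f g h, vle n (vsub (vmin n (c2 f h) (c2 g h)) (vscal 2 delta)) (c2 f g).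

Definition regular_lf (delta : vec) : Prop :=
  forall g h, exists gc hc gd hd,
    veq n (vscal 2 (l gc)) (c2 g h) /\ veq n (vscal 2 (l hc)) (c2 g h) /\
    g = mul gc gd /\ h = mul hc hd /\
    veq n (l g) (vadd (l gc) (l gd)) /\ veq n (l h) (vadd (l hc) (l hd)) /\
    vle n (l (mul (inv gc) hc)) (vscal 4 delta).

Definition proper_lf : Prop :=
  forall k : nat, exists L : list G, forall g, vle n (l g) (e1 k) -> In g L.

Definition dl (g h : G) : Z := l (mul (inv g) h) O.
End LF.

(* Gromov hyperbolicity of the word metric d_S restricted to H (4-point
   condition via Gromov products, doubled):
   (x|z)_w >= min((x|y)_w, (y|z)_w) - D *)
Definition word_hyperbolic_wrt {G : Type} (mul : G -> G -> G) (inv : G -> G) (one : G)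
    (H : G -> Prop) (S : list G) : Prop :=
  exists D : nat, forall w x y z : G, H w -> H x -> H y -> H z ->
    forall dwx dwy dwz dxy dyz dxz : nat,
      is_wlen mul inv one S (mul (inv w) x) dwx ->
      is_wlen mul inv one S (mul (inv w) y) dwy ->
      is_wlen mul inv one S (mul (inv w) z) dwz ->
      is_wlen mul inv one S (mul (inv x) y) dxy ->
      is_wlen mul inv one S (mul (inv y) z) dyz ->
      is_wlen mul inv one S (mul (inv x) z) dxz ->
      Z.of_nat dwx + Z.of_nat dwz - Z.of_nat dxz >=
        Z.min (Z.of_nat dwx + Z.of_nat dwy - Z.of_nat dxy)
              (Z.of_nat dwy + Z.of_nat dwz - Z.of_nat dyz) - 2 * Z.of_nat D.

Definition word_hyperbolic {G : Type} (mul : G -> G -> G) (inv : G -> G) (one : G)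
    (H : G -> Prop) : Prop :=
  exists S, generates mul inv one H S /\ word_hyperbolic_wrt mul inv one H S.

Definition quasi_isometric_word {G : Type} (mul : G -> G -> G) (inv : G -> G) (one : G)
    (H : G -> Prop) (S : list G) (d : G -> G -> Z) : Prop :=
  exists (f : G -> G) (lam C : Z), 1 <= lam /\ 0 <= C /\
    (forall x, H x -> H (f x)) /\
    (forall x y k, H x -> H y -> is_wlen mul inv one S (mul (inv x) y) k ->
        Z.of_nat k <= lam * d (f x) (f y) + C /\ d (f x) (f y) <= lam * Z.of_nat k + C) /\
    (forall y, H y -> exists x, H x /\ d (f x) y <= C).

From Stdlib Require Import ZArith List Lia Classical IndefiniteDescription ProofIrrelevance.
Open Scope Z_scope.

(* On [G1] every [l g] has the form [(L g, 0, ..., 0)], so [d1 x y := L (x^-1 y)] is an integer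
   metric on [G1] satisfying the four-point condition with constant [2 delta_1]. Regularity makes
   [d1] coarsely geodesic: every [g] with [L g >= 1] splits off a piece [a] with
   [1 <= L a <= M0] and [L a + L (a^-1 g) = L g]. Properness bounds the word length of the finitely
   many such pieces, so [d1] and the word metric [dS] of a finite generating set are bi-Lipschitz
   up to an additive constant, which is the quasi-isometry. Hyperbolicity then passes to the
   geodesic metric [dS] by a Morse-lemma argument: discrete [d1]-geodesics stay uniformly close to
   [dS]-geodesics (a detour of length [O(D)] around a point at distance [D] contradicts
   hyperbolicity of [d1] unless [D = O(log D)]), so [dS]-triangles are thin. *)

Lemma Z_crossing (f : nat -> Z) (t : Z) (m : nat) :
  f 0%nat <= t -> t < f m -> exists k, (k < m)%nat /\ f k <= t < f (S k).
Proof.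
  intros H0. induction m as [|m IH]; intros Hm; [lia|].
  destruct (Z_lt_le_dec t (f m)) as [Ht|Ht].
  - destruct (IH Ht) as [k [Hk Hfk]]. exists k. split; [lia|exact Hfk].
  - exists m. lia.
Qed.

Lemma last_satisfying_index (P : nat -> Prop) (m : nat) :
  P 0%nat -> exists k, (k <= m)%nat /\ P k /\ (k = m \/ ~ P (S k)).
Proof.
  intros H0. induction m as [|m [k [Hk [Pk [Ekm|NP]]]]].
  - exists 0%nat. auto.
  - subst k. destruct (classic (P (S m))) as [Q|Q].
    + exists (S m). auto.
    + exists m. auto.
  - exists k. split; [lia|auto].
Qed.

Fixpoint min_upto (f : nat -> Z) (K : nat) : Z :=
  match K with
  | O => f O
  | S K' => Z.min (min_upto f K') (f K)
  end.

Lemma min_upto_le (f : nat -> Z) (K i : nat) : (i <= K)%nat -> min_upto f K <= f i.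
Proof.
  induction K as [|K IH]; intros Hi; simpl.
  - replace i with 0%nat by lia. lia.
  - destruct (Nat.eq_dec i (S K)) as [->|Hne]; [lia|].
    specialize (IH ltac:(lia)). lia.
Qed.

Lemma min_upto_attained (f : nat -> Z) (K : nat) : exists i, (i <= K)%nat /\ min_upto f K = f i.
Proof.
  induction K as [|K [i [Hi E]]]; simpl.
  - exists 0%nat. auto.
  - destruct (Z_le_gt_dec (min_upto f K) (f (S K))).
    + exists i. lia.
    + exists (S K). lia.
Qed.

Lemma nat_argmax (f : nat -> Z) (K : nat) :
  exists i, (i <= K)%nat /\ forall j, (j <= K)%nat -> f j <= f i.
Proof.
  destruct (min_upto_attained (fun i => - f i) K) as [i [Hi E]].
  exists i. split; [exact Hi|]. intros j Hj.
  pose proof (min_upto_le (fun i => - f i) K j Hj). cbn beta in *. lia.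
Qed.

Lemma square_le_pow2 (j : nat) : ((4 + j) * (4 + j) <= 2 ^ (4 + j))%nat.
Proof.
  induction j as [|j IH].
  - simpl. lia.
  - replace (4 + S j)%nat with (S (4 + j)) by lia. rewrite Nat.pow_succ_r'. nia.
Qed.

Lemma pow2_not_linear (A B : Z) :
  exists K0, forall k : nat, Z.of_nat (2 ^ k) < A * Z.of_nat k + B -> Z.of_nat k <= K0.
Proof.
  exists (Z.abs A + Z.abs B + 4). intros k Hk.
  destruct (Z_le_gt_dec (Z.of_nat k) (Z.abs A + Z.abs B + 4)) as [Hle|Hgt]; [exact Hle|].
  exfalso. pose proof (square_le_pow2 (k - 4)) as Hsq.
  replace (4 + (k - 4))%nat with k in Hsq by lia.
  apply Nat2Z.inj_le in Hsq. rewrite Nat2Z.inj_mul in Hsq.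
  assert (A * Z.of_nat k <= Z.abs A * Z.of_nat k) by (apply Z.mul_le_mono_nonneg_r; lia).
  nia.
Qed.

(* The hypothesis says [D = O(log N)]; together with [N = O(D)] this bounds [D]. *)
Lemma log_bound_linear (a b c e : Z) : 0 <= a -> 0 <= e ->
  exists Dmax, forall (D : Z) (N : nat), Z.of_nat N <= a * D + b ->
    (forall kk, (N <= 2 ^ kk)%nat -> 2 * D <= c + e * Z.of_nat kk) -> D <= Dmax.
Proof.
  intros Ha He. destruct (pow2_not_linear (a * e) (a * c + 2 * b)) as [K0 HK0].
  exists (Z.abs c + e * Z.max 0 K0). intros D N HN Hlog.
  assert (e * 0 <= e * Z.max 0 K0) by (apply Z.mul_le_mono_nonneg_l; lia).
  destruct (le_lt_dec N 1) as [HN1|HN1].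
  - specialize (Hlog 0%nat ltac:(simpl; lia)). lia.
  - set (kk := Nat.log2_up N).
    destruct (Nat.log2_up_spec N HN1) as [Hlow Hup]. fold kk in Hlow, Hup.
    pose proof (Nat.log2_up_pos N HN1) as Hkk. fold kk in Hkk.
    specialize (Hlog kk Hup).
    assert (Hpow : Z.of_nat (2 ^ kk) < a * e * Z.of_nat kk + (a * c + 2 * b)).
    { replace kk with (S (Nat.pred kk)) at 1 by lia. rewrite Nat.pow_succ_r'.
      apply Nat2Z.inj_lt in Hlow. rewrite Nat2Z.inj_mul.
      assert (a * (2 * D) <= a * (c + e * Z.of_nat kk)) by (apply Z.mul_le_mono_nonneg_l; lia).
      nia. }
    specialize (HK0 kk Hpow).
    assert (e * Z.of_nat kk <= e * Z.max 0 K0) by (apply Z.mul_le_mono_nonneg_l; lia).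
    lia.
Qed.

Section CoarselyGeodesicHyperbolic.
Variable X : Type.
Variables d dw : X -> X -> Z.
Variables delta M Lam : Z.
Hypothesis delta_nonneg : 0 <= delta.
Hypothesis M_pos : 1 <= M.
Hypothesis Lam_pos : 1 <= Lam.
Hypothesis d_refl : forall x, d x x = 0.
Hypothesis d_sym : forall x y, d x y = d y x.
Hypothesis d_triangle : forall x y z, d x z <= d x y + d y z.

(* Twice the Gromov product [(a|b)_w]. *)
Definition gromov (w a b : X) : Z := d w a + d w b - d a b.

Hypothesis d_hyperbolic : forall w a b c,
  Z.min (gromov w a b) (gromov w b c) - delta <= gromov w a c.
Hypothesis d_coarse_geodesic : forall x y, 1 <= d x y ->
  exists z, d x z + d z y = d x y /\ 1 <= d x z <= M.
Hypothesis dw_refl : forall x, dw x x = 0.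
Hypothesis dw_sym : forall x y, dw x y = dw y x.
Hypothesis dw_triangle : forall x y z, dw x z <= dw x y + dw y z.
Hypothesis dw_path : forall x y, exists (j : nat) (v : nat -> X), Z.of_nat j <= dw x y /\
  v 0%nat = x /\ v j = y /\ forall i, (i < j)%nat -> dw (v i) (v (S i)) <= 1.
Hypothesis d_le_dw : forall x y, d x y <= M * dw x y.
Hypothesis dw_le_d : forall x y, dw x y <= Lam * d x y + Lam.

Lemma d_nonneg x y : 0 <= d x y.
Proof. pose proof (d_triangle x y x). rewrite d_refl, (d_sym y x) in H. lia. Qed.

(* Bisection: each halving of the path costs one [delta]. *)
Lemma gromov_path_bound (k N : nat) (x : nat -> X) (w : X) (m : Z) :
  (N <= 2 ^ k)%nat ->
  (N = 0%nat -> m <= 2 * d w (x 0%nat)) ->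
  (forall j, (j < N)%nat -> m <= gromov w (x j) (x (S j))) ->
  m - delta * Z.of_nat k <= gromov w (x 0%nat) (x N).
Proof.
  revert N x. induction k as [|k IH]; intros N x HN H0 Hsteps.
  - simpl in HN. destruct N as [|[|N]]; [| |lia].
    + specialize (H0 eq_refl). unfold gromov. rewrite d_refl. lia.
    + specialize (Hsteps 0%nat ltac:(lia)). simpl. lia.
  - rewrite Nat2Z.inj_succ.
    destruct (le_lt_dec N (2 ^ k)) as [Hle|Hlt].
    + specialize (IH N x Hle H0 Hsteps). nia.
    + pose proof (Nat.pow_nonzero 2 k ltac:(lia)).
      simpl in HN.
      assert (Hfirst := IH (2 ^ k)%nat x (le_n _) ltac:(lia) (fun j Hj => Hsteps j ltac:(lia))).
      assert (Hsecond : m - delta * Z.of_nat k <= gromov w (x (2 ^ k)%nat) (x N)).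
      { pose proof (IH (N - 2 ^ k)%nat (fun u => x (2 ^ k + u)%nat) ltac:(lia) ltac:(lia)) as Q.
        simpl in Q. rewrite Nat.add_0_r in Q. replace (2 ^ k + (N - 2 ^ k))%nat with N in Q by lia.
        apply Q. intros j Hj. replace (2 ^ k + S j)%nat with (S (2 ^ k + j)) by lia.
        apply Hsteps. lia. }
      pose proof (d_hyperbolic w (x 0%nat) (x (2 ^ k)%nat) (x N)). nia.
Qed.

(* Discrete [d]-geodesics with steps at most [M]: they replace geodesics in [(X, d)]. *)
Definition chain (x y : X) (a : nat -> X) (m : nat) : Prop :=
  a 0%nat = x /\ a m = y /\ Z.of_nat m <= d x y + 1 /\
  (forall i, (i < m)%nat -> d (a i) (a (S i)) <= M) /\
  (forall i j k, (i <= j)%nat -> (j <= k)%nat -> (k <= m)%nat ->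
     d (a i) (a j) + d (a j) (a k) = d (a i) (a k)).

Lemma chain_trivial x y : d x y <= 0 -> exists a m, chain x y a m.
Proof.
  intros Hxy. pose proof (d_nonneg x y).
  exists (fun i => match i with 0%nat => x | _ => y end), 1%nat.
  repeat split; try lia.
  - intros i Hi. replace i with 0%nat by lia. lia.
  - intros i j k Hij Hjk Hk.
    destruct i as [|[|i]], j as [|[|j]], k as [|[|k]]; try lia; rewrite ?d_refl; lia.
Qed.

Lemma chain_exists x y : exists a m, chain x y a m.
Proof.
  remember (Z.to_nat (d x y)) as t eqn:Ht. assert (Hb : (Z.to_nat (d x y) <= t)%nat) by lia.
  clear Ht. revert x y Hb. induction t as [|t IH]; intros x y Hb.
  { apply chain_trivial. lia. }
  destruct (Z_le_gt_dec 1 (d x y)) as [H1|H1]; [|apply chain_trivial; lia].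
  destruct (d_coarse_geodesic x y H1) as [z [Hz1 Hz2]].
  destruct (IH z y ltac:(lia)) as [a [m [A0 [Am [Alen [Astep Aadd]]]]]].
  assert (Hvia : forall k, (k <= m)%nat -> d x (a k) = d x z + d z (a k)).
  { intros k Hk. pose proof (d_triangle x z (a k)). pose proof (d_triangle x (a k) y).
    pose proof (Aadd 0%nat k m ltac:(lia) Hk (le_n _)). rewrite A0, Am in *. lia. }
  exists (fun i => match i with 0%nat => x | S i' => a i' end), (S m).
  repeat split; auto; try lia.
  - intros [|i] Hi; [rewrite A0; lia|apply Astep; lia].
  - intros [|i] [|j] [|k] Hij Hjk Hk; try lia; rewrite ?d_refl; try lia.
    + rewrite (Hvia j), (Hvia k) by lia.
      pose proof (Aadd 0%nat j k ltac:(lia) ltac:(lia) ltac:(lia)). rewrite A0 in *. lia.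
    + apply Aadd; lia.
Qed.

Lemma chain_dist x y a m i j : chain x y a m -> (i <= j)%nat -> (j <= m)%nat ->
  d (a i) (a j) = d x (a j) - d x (a i).
Proof.
  intros [A0 [_ [_ [_ Aadd]]]] Hij Hj.
  pose proof (Aadd 0%nat i j ltac:(lia) Hij Hj). rewrite A0 in *. lia.
Qed.

Lemma chain_between x y a m i : chain x y a m -> (i <= m)%nat -> d x (a i) + d (a i) y = d x y.
Proof.
  intros [A0 [Am [_ [_ Aadd]]]] Hi.
  pose proof (Aadd 0%nat i m ltac:(lia) Hi (le_n _)). rewrite A0, Am in *. lia.
Qed.

Lemma chain_rev x y a m : chain x y a m -> chain y x (fun u => a (m - u)%nat) m.
Proof.
  intros [A0 [Am [Alen [Astep Aadd]]]]. repeat split.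
  - rewrite Nat.sub_0_r. exact Am.
  - rewrite Nat.sub_diag. exact A0.
  - rewrite d_sym. exact Alen.
  - intros i Hi. rewrite d_sym. replace (m - i)%nat with (S (m - S i)) by lia. apply Astep. lia.
  - intros i j k Hij Hjk Hk. pose proof (Aadd (m - k)%nat (m - j)%nat (m - i)%nat
      ltac:(lia) ltac:(lia) ltac:(lia)).
    rewrite (d_sym (a (m - k)%nat)), (d_sym (a (m - j)%nat) (a (m - i)%nat)),
      (d_sym (a (m - k)%nat)) in H. lia.
Qed.

Definition geodesic (x y : X) (v : nat -> X) (K : nat) : Prop :=
  v 0%nat = x /\ v K = y /\ forall i j, (i <= K)%nat -> (j <= K)%nat ->
     dw (v i) (v j) = Z.abs (Z.of_nat i - Z.of_nat j).

Lemma path_dw_le (v : nat -> X) (j : nat) :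
  (forall i, (i < j)%nat -> dw (v i) (v (S i)) <= 1) ->
  forall i i', (i <= i')%nat -> (i' <= j)%nat -> dw (v i) (v i') <= Z.of_nat i' - Z.of_nat i.
Proof.
  intros Hsteps i i'. induction i' as [|i' IH]; intros H1 H2.
  - replace i with 0%nat by lia. rewrite dw_refl. lia.
  - destruct (Nat.eq_dec i (S i')) as [->|Hne]; [rewrite dw_refl; lia|].
    specialize (IH ltac:(lia) ltac:(lia)). pose proof (dw_triangle (v i) (v i') (v (S i'))).
    specialize (Hsteps i' ltac:(lia)). lia.
Qed.

Lemma geodesic_exists x y : exists v K, geodesic x y v K.
Proof.
  destruct (dw_path x y) as [j [v [Hj [V0 [Vj Hsteps]]]]].
  pose proof (path_dw_le v j Hsteps) as Hle.
  assert (Hexact : forall i i', (i <= i')%nat -> (i' <= j)%nat ->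
    dw (v i) (v i') = Z.of_nat i' - Z.of_nat i).
  { intros i i' H1 H2. pose proof (Hle i i' H1 H2). pose proof (Hle 0%nat i ltac:(lia) ltac:(lia)).
    pose proof (Hle i' j H2 (le_n _)). pose proof (dw_triangle x (v i) y).
    pose proof (dw_triangle (v i) (v i') y). subst x y. lia. }
  exists v, j. repeat split; auto. intros i i' Hi Hi'. destruct (le_lt_dec i i').
  - rewrite Hexact; auto. lia.
  - rewrite dw_sym, Hexact; lia.
Qed.

Lemma geodesic_rev x y v K : geodesic x y v K -> geodesic y x (fun i => v (K - i)%nat) K.
Proof.
  intros [V0 [VK Vd]]. repeat split.
  - rewrite Nat.sub_0_r. exact VK.
  - rewrite Nat.sub_diag. exact V0.
  - intros i j Hi Hj. rewrite Vd by lia. lia.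
Qed.

Lemma geodesic_between x y v K i : geodesic x y v K -> (i <= K)%nat ->
  dw x (v i) + dw (v i) y = dw x y.
Proof.
  intros [V0 [VK Vd]] Hi. pose proof (Vd 0%nat i ltac:(lia) Hi). pose proof (Vd i K Hi (le_n _)).
  pose proof (Vd 0%nat K ltac:(lia) (le_n _)). subst x y. lia.
Qed.

Lemma geodesic_subpath x y v K p q : geodesic x y v K -> (p <= K)%nat -> (q <= K)%nat ->
  exists (w : nat -> X) (ell : nat),
    w 0%nat = v p /\ w ell = v q /\ Z.of_nat ell = dw (v p) (v q) /\
    (forall u, (u <= ell)%nat -> exists i, (i <= K)%nat /\ w u = v i) /\
    (forall u, (u < ell)%nat -> d (w u) (w (S u)) <= M).
Proof.
  intros [_ [_ Vd]] Hp Hq.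
  assert (Hstep : forall i j, (i <= K)%nat -> (j <= K)%nat -> Z.abs (Z.of_nat i - Z.of_nat j) = 1 ->
    d (v i) (v j) <= M).
  { intros i j Hi Hj E. pose proof (d_le_dw (v i) (v j)). rewrite Vd, E in * by auto. lia. }
  destruct (le_lt_dec p q) as [Hpq|Hqp].
  - exists (fun u => v (p + u)%nat), (q - p)%nat. rewrite Nat.add_0_r, Vd by lia.
    replace (p + (q - p))%nat with q by lia. repeat split; try lia.
    + intros u Hu. exists (p + u)%nat. split; [lia|reflexivity].
    + intros u Hu. apply Hstep; lia.
  - exists (fun u => v (p - u)%nat), (p - q)%nat. rewrite Nat.sub_0_r, Vd by lia.
    replace (p - (p - q))%nat with q by lia. repeat split; try lia.
    + intros u Hu. exists (p - u)%nat. split; [lia|reflexivity].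
    + intros u Hu. apply Hstep; lia.
Qed.

Definition concat (f : nat -> X) (n : nat) (g : nat -> X) (u : nat) : X :=
  if (u <=? n)%nat then f u else g (u - n)%nat.

Lemma concat_end f n g n' : f n = g 0%nat -> concat f n g (n + n') = g n'.
Proof.
  intros E. unfold concat. destruct (Nat.leb_spec (n + n') n).
  - replace n' with 0%nat by lia. rewrite Nat.add_0_r. exact E.
  - f_equal. lia.
Qed.

Lemma concat_forall (P : X -> Prop) f n g n' :
  (forall u, (u <= n)%nat -> P (f u)) -> (forall u, (u <= n')%nat -> P (g u)) ->
  forall u, (u <= n + n')%nat -> P (concat f n g u).
Proof.
  intros Hf Hg u Hu. unfold concat. destruct (Nat.leb_spec u n); [apply Hf|apply Hg]; lia.
Qed.

Lemma concat_steps (R : X -> X -> Prop) f n g n' : f n = g 0%nat ->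
  (forall u, (u < n)%nat -> R (f u) (f (S u))) -> (forall u, (u < n')%nat -> R (g u) (g (S u))) ->
  forall u, (u < n + n')%nat -> R (concat f n g u) (concat f n g (S u)).
Proof.
  intros E Hf Hg u Hu. unfold concat.
  destruct (Nat.leb_spec u n), (Nat.leb_spec (S u) n); try lia.
  - apply Hf; lia.
  - replace u with n by lia. rewrite E. replace (S n - n)%nat with 1%nat by lia. apply Hg. lia.
  - replace (S u - n)%nat with (S (u - n)) by lia. apply Hg. lia.
Qed.

Lemma between_stays_far c p q z D :
  D <= d c q -> (d p q = 0 \/ 2 * D <= d c p) -> d p q <= D -> d p z + d z q = d p q ->
  D <= d c z.
Proof.
  intros Hq Hp Hpq Hz. pose proof (d_triangle c z q). pose proof (d_triangle c z p).
  pose proof (d_nonneg p z). pose proof (d_nonneg z q). rewrite (d_sym z p) in *. lia.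
Qed.

Lemma far_detour x y v K p q c P Q D : geodesic x y v K -> (p <= K)%nat -> (q <= K)%nat ->
  (forall i, (i <= K)%nat -> D <= d c (v i)) ->
  d P (v p) <= D -> (d P (v p) = 0 \/ 2 * D <= d c P) ->
  d Q (v q) <= D -> (d Q (v q) = 0 \/ 2 * D <= d c Q) ->
  exists h N, h 0%nat = P /\ h N = Q /\ Z.of_nat N <= 2 * D + 2 + dw (v p) (v q) /\
    (forall u, (u <= N)%nat -> D <= d c (h u)) /\ (forall u, (u < N)%nat -> d (h u) (h (S u)) <= M).
Proof.
  intros Hv Hp Hq Hfar HP HPc HQ HQc.
  destruct (chain_exists P (v p)) as [a1 [m1 C1]].
  destruct (chain_exists (v q) Q) as [a2 [m2 C2]].
  destruct (geodesic_subpath x y v K p q Hv Hp Hq) as [w [ell [W0 [Wl [Well [Won Wsteps]]]]]].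
  pose proof C1 as [B0 [Bm [Blen [Bsteps Badd]]]].
  pose proof C2 as [E0 [Em [Elen [Esteps Eadd]]]].
  exists (concat a1 m1 (concat w ell a2)), (m1 + (ell + m2))%nat.
  split; [|split; [|split; [|split]]].
  - unfold concat. simpl. exact B0.
  - rewrite concat_end, concat_end; auto.
    + rewrite Wl. auto.
    + rewrite Bm, <- W0. unfold concat. simpl. reflexivity.
  - rewrite !Nat2Z.inj_add, Well. rewrite (d_sym (v q)) in Elen. lia.
  - apply (concat_forall (fun z => D <= d c z)); [|apply (concat_forall (fun z => D <= d c z))].
    + intros u Hu. apply (between_stays_far c P (v p)); auto.
      pose proof (Badd 0%nat u m1 ltac:(lia) Hu (le_n _)). rewrite B0, Bm in *. lia.
    + intros u Hu. destruct (Won u Hu) as [i [Hi ->]]. auto.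
    + intros u Hu. apply (between_stays_far c Q (v q)); auto.
      pose proof (Eadd 0%nat u m2 ltac:(lia) Hu (le_n _)). rewrite E0, Em in *.
      rewrite (d_sym Q (a2 u)), (d_sym (a2 u) (v q)), (d_sym Q (v q)). lia.
  - apply (concat_steps (fun s t => d s t <= M)); auto.
    + rewrite Bm, <- W0. reflexivity.
    + apply (concat_steps (fun s t => d s t <= M)); auto. rewrite Wl, E0. reflexivity.
Qed.

Lemma chain_anchor_before x y a m v K D k0 :
  chain x y a m -> v 0%nat = x -> 0 <= D -> (k0 <= m)%nat ->
  (forall k, (k <= m)%nat -> exists p, (p <= K)%nat /\ d (a k) (v p) <= D) ->
  exists i p, (i <= k0)%nat /\ (p <= K)%nat /\ d (a i) (v p) <= D /\
    d (a i) (a k0) <= 2 * D + M /\ (d (a i) (v p) = 0 \/ 2 * D <= d (a i) (a k0)).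
Proof.
  intros Ha V0 HD Hk0 Hcover. pose proof Ha as [A0 [_ [_ [Astep _]]]].
  destruct (Z_le_gt_dec (d x (a k0)) (2 * D)) as [Hnear|Hfar].
  { exists 0%nat, 0%nat. rewrite A0, V0, d_refl. lia. }
  destruct (Z_crossing (fun k => d x (a k)) (d x (a k0) - 2 * D - 1) k0
    ltac:(cbn beta; rewrite A0, d_refl; lia) ltac:(cbn beta; lia)) as [i [Hi Hcross]].
  cbn beta in Hcross.
  destruct (Hcover i ltac:(lia)) as [p [Hp Hip]].
  pose proof (Astep i ltac:(lia)) as Hstep.
  rewrite (chain_dist x y a m i (S i)) in Hstep by (auto; lia).
  exists i, p. rewrite (chain_dist x y a m i k0) by (auto; lia). lia.
Qed.

Lemma chain_anchor_after x y a m v K D k0 :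
  chain x y a m -> v K = y -> 0 <= D -> (k0 <= m)%nat ->
  (forall k, (k <= m)%nat -> exists p, (p <= K)%nat /\ d (a k) (v p) <= D) ->
  exists j q, (k0 <= j <= m)%nat /\ (q <= K)%nat /\ d (a j) (v q) <= D /\
    d (a k0) (a j) <= 2 * D + M /\ (d (a j) (v q) = 0 \/ 2 * D <= d (a k0) (a j)).
Proof.
  intros Ha VK HD Hk0 Hcover.
  destruct (chain_anchor_before y x (fun u => a (m - u)%nat) m (fun u => v (K - u)%nat) K D
    (m - k0)) as [i [p [Hi [Hp Hclose]]]].
  - apply chain_rev. exact Ha.
  - rewrite Nat.sub_0_r. exact VK.
  - exact HD.
  - lia.
  - intros k Hk. destruct (Hcover (m - k)%nat ltac:(lia)) as [p [Hp Hd]].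
    exists (K - p)%nat. split; [lia|]. replace (K - (K - p))%nat with p by lia. exact Hd.
  - cbn beta in Hclose. replace (m - (m - k0))%nat with k0 in Hclose by lia.
    exists (m - i)%nat, (K - p)%nat. rewrite (d_sym (a k0)). split; [lia|]. split; [lia|].
    exact Hclose.
Qed.

(* [a k0] is a chain point farthest from [v]. Through [v] there is a detour of length [O(D)]
   around it that stays [D] away from it, which hyperbolicity only allows for [D = O(log D)]. *)
Lemma chain_geodesic_gap_bound : exists Dmax, forall x y v K a m k0 D,
  geodesic x y v K -> chain x y a m -> (k0 <= m)%nat -> 0 <= D ->
  (forall i, (i <= K)%nat -> D <= d (a k0) (v i)) ->
  (forall k, (k <= m)%nat -> exists p, (p <= K)%nat /\ d (a k) (v p) <= D) ->
  D <= Dmax.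
Proof.
  destruct (log_bound_linear (2 + 6 * Lam) (2 + 2 * Lam * M + Lam) M delta ltac:(lia) delta_nonneg)
    as [Dmax HDmax].
  exists Dmax. intros x y v K a m k0 D Hv Ha Hk0 HD Hfar Hcover.
  pose proof Hv as [V0 [VK _]].
  destruct (chain_anchor_before x y a m v K D k0 Ha V0 HD Hk0 Hcover)
    as [i [p [Hi [Hp [HP [HPk HPc]]]]]].
  destruct (chain_anchor_after x y a m v K D k0 Ha VK HD Hk0 Hcover)
    as [j [q [Hj [Hq [HQ [HQk HQc]]]]]].
  rewrite (d_sym (a i) (a k0)) in HPk, HPc.
  destruct (far_detour x y v K p q (a k0) (a i) (a j) D Hv Hp Hq Hfar HP HPc HQ HQc)
    as [h [N [H0 [HN [Hlen [Hhfar Hsteps]]]]]].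
  apply (HDmax D N).
  - pose proof (dw_le_d (v p) (v q)).
    pose proof (d_triangle (v p) (a k0) (v q)). pose proof (d_triangle (v p) (a i) (a k0)).
    pose proof (d_triangle (a k0) (a j) (v q)).
    pose proof (d_sym (v p) (a i)). pose proof (d_sym (a i) (a k0)).
    assert (Lam * d (v p) (v q) <= Lam * (6 * D + 2 * M)) by (apply Z.mul_le_mono_nonneg_l; lia).
    lia.
  - intros kk Hkk.
    assert (Hmid : gromov (a k0) (a i) (a j) = 0).
    { pose proof Ha as [_ [_ [_ [_ Aadd]]]]. unfold gromov.
      pose proof (Aadd i k0 j ltac:(lia) ltac:(lia) ltac:(lia)).
      rewrite (d_sym (a k0) (a i)). lia. }
    assert (Hg : 2 * D - M - delta * Z.of_nat kk <= gromov (a k0) (h 0%nat) (h N)).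
    { apply gromov_path_bound; [exact Hkk| |].
      - intros _. specialize (Hhfar 0%nat ltac:(lia)). lia.
      - intros u Hu. unfold gromov. pose proof (Hhfar u ltac:(lia)).
        pose proof (Hhfar (S u) ltac:(lia)). pose proof (Hsteps u Hu). lia. }
    rewrite H0, HN, Hmid in Hg. lia.
Qed.

Lemma chain_near_geodesic : exists E, 0 <= E /\
  forall x y v K a m, geodesic x y v K -> chain x y a m ->
  forall k, (k <= m)%nat -> exists i, (i <= K)%nat /\ d (a k) (v i) <= E.
Proof.
  destruct chain_geodesic_gap_bound as [Dmax HDmax].
  exists (Z.max 0 Dmax). split; [lia|]. intros x y v K a m Hv Ha.
  set (gap k := min_upto (fun i => d (a k) (v i)) K).
  assert (Hgap : forall k, exists p, (p <= K)%nat /\ gap k = d (a k) (v p))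
    by (intros k; apply min_upto_attained).
  destruct (nat_argmax gap m) as [k0 [Hk0 Hmax]].
  assert (Hbound : gap k0 <= Dmax).
  { apply (HDmax x y v K a m k0 (gap k0) Hv Ha Hk0).
    - destruct (Hgap k0) as [i [_ ->]]. apply d_nonneg.
    - intros i Hi. apply (min_upto_le (fun i => d (a k0) (v i))). exact Hi.
    - intros k Hk. destruct (Hgap k) as [p [Hp E]]. exists p. split; [exact Hp|].
      rewrite <- E. exact (Hmax k Hk). }
  intros k Hk. destruct (Hgap k) as [p [Hp E]]. exists p. split; [exact Hp|].
  specialize (Hmax k Hk). lia.
Qed.

(* Follow the chain up to its last point whose nearest geodesic point comes before [v s]; the
   next chain point is near a geodesic point after [v s], which pins [v s] down. *)
Lemma geodesic_near_chain : exists H, 0 <= H /\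
  forall x y v K a m, geodesic x y v K -> chain x y a m ->
  forall s, (s <= K)%nat -> exists k, (k <= m)%nat /\ d (v s) (a k) <= H.
Proof.
  destruct chain_near_geodesic as [E [HE Hnear]].
  set (W := Lam * (2 * E + M) + Lam).
  assert (HW : 0 <= W) by (unfold W; nia).
  exists (M * W + E). split; [nia|].
  intros x y v K a m Hv Ha s Hs.
  pose proof Ha as [A0 [Am [_ [Astep _]]]]. pose proof Hv as [V0 [VK Vd]].
  set (P k := exists i, (i <= K)%nat /\ (i <= s)%nat /\ d (a k) (v i) <= E).
  destruct (last_satisfying_index P m) as [k [Hk [[i [HiK [His Hi]]] Hlast]]].
  { exists 0%nat. rewrite A0, V0, d_refl. repeat split; lia. }
  assert (Hgap : Z.of_nat s - Z.of_nat i <= W).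
  { destruct (Nat.eq_dec k m) as [->|Hkm].
    - pose proof (dw_le_d (v i) (v K)) as Hup. rewrite Vd, VK, <- Am, d_sym in Hup by lia.
      assert (Lam * d (a m) (v i) <= Lam * E) by (apply Z.mul_le_mono_nonneg_l; lia).
      unfold W. nia.
    - destruct Hlast as [|Hlast]; [lia|].
      destruct (Hnear x y v K a m Hv Ha (S k) ltac:(lia)) as [i' [Hi'K Hi']].
      assert (Hi's : (s < i')%nat).
      { destruct (le_lt_dec i' s); [|assumption]. exfalso. apply Hlast. exists i'. auto. }
      pose proof (dw_le_d (v i) (v i')) as Hup. rewrite Vd in Hup by lia.
      pose proof (d_triangle (v i) (a k) (v i')). pose proof (d_triangle (a k) (a (S k)) (v i')).
      pose proof (Astep k ltac:(lia)). rewrite (d_sym (v i) (a k)) in *.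
      assert (Lam * d (v i) (v i') <= Lam * (2 * E + M)) by (apply Z.mul_le_mono_nonneg_l; lia).
      unfold W. lia. }
  exists k. split; [exact Hk|].
  pose proof (d_le_dw (v s) (v i)) as Hlow. rewrite Vd in Hlow by lia.
  replace (Z.abs (Z.of_nat s - Z.of_nat i)) with (Z.of_nat s - Z.of_nat i) in Hlow by lia.
  pose proof (d_triangle (v s) (v i) (a k)). rewrite (d_sym (v i) (a k)) in *.
  assert (M * (Z.of_nat s - Z.of_nat i) <= M * W) by (apply Z.mul_le_mono_nonneg_l; lia).
  lia.
Qed.

Lemma chain_near_small_gromov x y b mb p : chain x y b mb -> gromov p x y <= delta ->
  exists u, (u <= mb)%nat /\ d p (b u) <= 2 * M + 2 * delta.
Proof.
  intros Hb Hp. pose proof Hb as [B0 [Bm [_ [Bstep _]]]]. unfold gromov in Hp.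
  destruct (Z_le_gt_dec (d x y) (d x p)) as [Hfar|Hclose].
  { exists mb. split; [lia|]. rewrite Bm, (d_sym p x) in *. lia. }
  destruct (Z_crossing (fun u => d x (b u)) (d x p) mb
    ltac:(cbn beta; rewrite B0, d_refl; apply d_nonneg)
    ltac:(cbn beta; rewrite Bm; lia)) as [u [Hu Hcross]].
  cbn beta in Hcross. exists u. split; [lia|].
  pose proof (d_hyperbolic x p y (b u)). unfold gromov in *.
  pose proof (chain_between x y b mb u Hb ltac:(lia)).
  pose proof (chain_dist x y b mb u (S u) Hb ltac:(lia) ltac:(lia)). pose proof (Bstep u Hu).
  rewrite (d_sym y (b u)), (d_sym p x) in *. lia.
Qed.

Lemma chain_triangle_slim x y z a m b mb c mc :
  chain x z a m -> chain x y b mb -> chain y z c mc -> forall k, (k <= m)%nat ->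
  (exists u, (u <= mb)%nat /\ d (a k) (b u) <= 2 * M + 2 * delta) \/
  (exists u, (u <= mc)%nat /\ d (a k) (c u) <= 2 * M + 2 * delta).
Proof.
  intros Ha Hb Hc k Hk.
  pose proof (chain_between x z a m k Ha Hk). pose proof (d_hyperbolic (a k) x y z).
  unfold gromov in *. rewrite (d_sym x (a k)) in *.
  destruct (Z_le_gt_dec (gromov (a k) x y) delta) as [Hxy|Hxy].
  - left. apply (chain_near_small_gromov x y b mb); auto.
  - right. apply (chain_near_small_gromov y z c mc); auto. unfold gromov in *. lia.
Qed.

Lemma geodesic_triangle_slim : exists B, 0 <= B /\
  forall x y z u K v1 K1 v2 K2, geodesic x z u K -> geodesic x y v1 K1 -> geodesic y z v2 K2 ->
  forall s, (s <= K)%nat -> (exists i, (i <= K1)%nat /\ dw (u s) (v1 i) <= B) \/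
                           (exists i, (i <= K2)%nat /\ dw (u s) (v2 i) <= B).
Proof.
  destruct chain_near_geodesic as [E [HE Hnear]].
  destruct geodesic_near_chain as [H [HH Hfollow]].
  set (R := H + (2 * M + 2 * delta) + E).
  exists (Lam * R + Lam). split; [unfold R; nia|].
  intros x y z u K v1 K1 v2 K2 Hu H1 H2 s Hs.
  destruct (chain_exists x z) as [a [m Ha]].
  destruct (chain_exists x y) as [b [mb Hb]].
  destruct (chain_exists y z) as [c [mc Hc]].
  destruct (Hfollow x z u K a m Hu Ha s Hs) as [k [Hk Hdk]].
  assert (Hdw : forall t, d (u s) t <= R -> dw (u s) t <= Lam * R + Lam).
  { intros t Ht. pose proof (dw_le_d (u s) t).
    assert (Lam * d (u s) t <= Lam * R) by (apply Z.mul_le_mono_nonneg_l; lia). lia. }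
  destruct (chain_triangle_slim x y z a m b mb c mc Ha Hb Hc k Hk)
    as [[w [Hw Hdw']]|[w [Hw Hdw']]].
  - destruct (Hnear x y v1 K1 b mb H1 Hb w Hw) as [i [Hi Hdi]].
    left. exists i. split; [exact Hi|]. apply Hdw.
    pose proof (d_triangle (u s) (a k) (b w)). pose proof (d_triangle (u s) (b w) (v1 i)).
    unfold R. lia.
  - destruct (Hnear y z v2 K2 c mc H2 Hc w Hw) as [i [Hi Hdi]].
    right. exists i. split; [exact Hi|]. apply Hdw.
    pose proof (d_triangle (u s) (a k) (c w)). pose proof (d_triangle (u s) (c w) (v2 i)).
    unfold R. lia.
Qed.

(* The last point of [u] that is close to the side [w x] is also close to the side [w y]. *)
Lemma geodesic_triangle_insize : exists C, 0 <= C /\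
  forall w x y u K g1 K1 g2 K2, geodesic x y u K -> geodesic w x g1 K1 -> geodesic w y g2 K2 ->
  exists s, (s <= K)%nat /\ 2 * dw w (u s) <= dw w x + dw w y - dw x y + C.
Proof.
  destruct geodesic_triangle_slim as [B [HB Hslim]].
  exists (4 * B + 4). split; [lia|].
  intros w x y u K g1 K1 g2 K2 Hu H1 H2.
  pose proof (geodesic_rev w x g1 K1 H1) as H1r.
  pose proof Hu as [U0 [UK Ud]]. pose proof H1 as [_ [WK _]]. pose proof H2 as [_ [YK _]].
  set (P s := exists i, (i <= K1)%nat /\ dw (u s) (g1 i) <= B).
  destruct (last_satisfying_index P K) as [s [Hs [[i1 [Hi1 Hd1]] Hlast]]].
  { exists K1. split; [lia|]. rewrite U0, WK, dw_refl. lia. }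
  assert (Hclose2 : exists i2, (i2 <= K2)%nat /\ dw (u s) (g2 i2) <= B + 1).
  { destruct (Nat.eq_dec s K) as [->|Hne].
    - exists K2. split; [lia|]. rewrite UK, YK, dw_refl. lia.
    - destruct Hlast as [|Hlast]; [lia|].
      destruct (Hslim x w y u K _ K1 g2 K2 Hu H1r H2 (S s) ltac:(lia))
        as [[i [Hi Hdi]]|[i [Hi Hdi]]].
      + exfalso. apply Hlast. exists (K1 - i)%nat. split; [lia|exact Hdi].
      + exists i. split; [exact Hi|]. pose proof (dw_triangle (u s) (u (S s)) (g2 i)).
        rewrite Ud in * by lia. lia. }
  destruct Hclose2 as [i2 [Hi2 Hd2]].
  exists s. split; [exact Hs|].
  pose proof (geodesic_between w x g1 K1 i1 H1 Hi1).
  pose proof (geodesic_between w y g2 K2 i2 H2 Hi2).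
  pose proof (geodesic_between x y u K s Hu Hs).
  pose proof (dw_triangle w (g1 i1) (u s)). pose proof (dw_triangle w (g2 i2) (u s)).
  pose proof (dw_triangle x (g1 i1) (u s)). pose proof (dw_triangle (u s) (g2 i2) y).
  rewrite (dw_sym (g1 i1) (u s)), (dw_sym (g2 i2) (u s)), (dw_sym x (g1 i1)) in *.
  lia.
Qed.

Theorem dw_hyperbolic : exists D, 0 <= D /\ forall w x y z,
  Z.min (dw w x + dw w y - dw x y) (dw w y + dw w z - dw y z) - D <= dw w x + dw w z - dw x z.
Proof.
  destruct geodesic_triangle_slim as [B [HB Hslim]].
  destruct geodesic_triangle_insize as [C [HC Hinsize]].
  exists (C + 2 * B). split; [lia|]. intros w x y z.
  destruct (geodesic_exists x z) as [u [K Hu]].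
  destruct (geodesic_exists x y) as [v1 [K1 H1]].
  destruct (geodesic_exists y z) as [v2 [K2 H2]].
  destruct (geodesic_exists w x) as [g1 [L1 Hg1]].
  destruct (geodesic_exists w z) as [g2 [L2 Hg2]].
  destruct (Hinsize w x z u K g1 L1 g2 L2 Hu Hg1 Hg2) as [s [Hs Hds]].
  destruct (Hslim x y z u K v1 K1 v2 K2 Hu H1 H2 s Hs) as [[i [Hi Hdi]]|[i [Hi Hdi]]].
  - pose proof (geodesic_between x y v1 K1 i H1 Hi).
    pose proof (dw_triangle w (v1 i) x). pose proof (dw_triangle w (v1 i) y).
    pose proof (dw_triangle w (u s) (v1 i)). rewrite (dw_sym (v1 i) x) in *. lia.
  - pose proof (geodesic_between y z v2 K2 i H2 Hi).
    pose proof (dw_triangle w (v2 i) y). pose proof (dw_triangle w (v2 i) z).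
    pose proof (dw_triangle w (u s) (v2 i)). rewrite (dw_sym (v2 i) y) in *. lia.
Qed.

End CoarselyGeodesicHyperbolic.

Definition flat (n : nat) (a : vec) : Prop := forall i, (1 <= i)%nat -> (i < n)%nat -> a i = 0.

Lemma ht_le_1_flat n a : (ht n a <= 1)%nat <-> flat n a.
Proof.
  unfold ht, flat. split.
  - induction n as [|n IH]; intros H i Hi1 Hi2; [lia|].
    simpl in H. destruct (Z.eqb_spec (a n) 0) as [E|E]; [|lia].
    destruct (Nat.eq_dec i n) as [->|Hne]; [exact E|]. apply IH; auto. lia.
  - induction n as [|[|n] IH]; intros H; simpl; [lia| |].
    + destruct (Z.eqb (a 0%nat) 0); simpl; lia.
    + rewrite (H (S n)) by lia. simpl Z.eqb. cbv iota. apply IH. intros i Hi1 Hi2. apply H; lia.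
Qed.

Lemma vcmp_flat n a b : (1 <= n)%nat -> flat n a -> flat n b ->
  vcmp n a b = Z.compare (a 0%nat) (b 0%nat).
Proof.
  unfold vcmp, flat. intros Hn Ha Hb.
  enough (H : forall m, (1 <= m)%nat -> (m <= n)%nat ->
    vcmp_aux a b m = Z.compare (a 0%nat) (b 0%nat)) by (apply H; lia).
  induction m as [|[|m] IH]; intros H1 H2; simpl; [lia| |].
  - destruct (Z.compare (a 0%nat) (b 0%nat)); reflexivity.
  - rewrite (Ha (S m)), (Hb (S m)) by lia. apply IH; lia.
Qed.

Lemma vle_flat n a b : (1 <= n)%nat -> flat n a -> flat n b -> vle n a b <-> a 0%nat <= b 0%nat.
Proof.
  intros Hn Ha Hb. unfold vle. rewrite vcmp_flat by auto. rewrite Z.compare_gt_iff. lia.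
Qed.

Lemma vmin_flat n a b : (1 <= n)%nat -> flat n a -> flat n b ->
  flat n (vmin n a b) /\ vmin n a b 0%nat = Z.min (a 0%nat) (b 0%nat).
Proof.
  intros Hn Ha Hb. unfold vmin. rewrite vcmp_flat by auto.
  destruct (Z.compare_spec (a 0%nat) (b 0%nat)); split; auto; lia.
Qed.

Lemma flat_vadd n a b : flat n a -> flat n b -> flat n (vadd a b).
Proof. unfold flat, vadd. intros Ha Hb i Hi1 Hi2. rewrite Ha, Hb by auto. reflexivity. Qed.

Lemma flat_vsub n a b : flat n a -> flat n b -> flat n (vsub a b).
Proof. unfold flat, vsub. intros Ha Hb i Hi1 Hi2. rewrite Ha, Hb by auto. reflexivity. Qed.

Lemma flat_vscal n k a : flat n a -> flat n (vscal k a).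
Proof. unfold flat, vscal. intros Ha i Hi1 Hi2. rewrite Ha by auto. lia. Qed.

Lemma flat_e1 n k : flat n (e1 k).
Proof. unfold flat, e1. intros [|i] Hi1 Hi2; [lia|reflexivity]. Qed.

Lemma flat_vzero n : flat n vzero.
Proof. unfold flat, vzero. reflexivity. Qed.

Section Group.
Context {G : Type} (mul : G -> G -> G) (inv : G -> G) (one : G).
Hypothesis Hgrp : is_group mul inv one.

Lemma gmul_assoc x y z : mul x (mul y z) = mul (mul x y) z.
Proof. exact (grp_assoc _ _ _ Hgrp x y z). Qed.

Lemma gmul_1_l x : mul one x = x.
Proof. exact (grp_one_l _ _ _ Hgrp x). Qed.

Lemma gmul_inv_l x : mul (inv x) x = one.
Proof. exact (grp_inv_l _ _ _ Hgrp x). Qed.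

Lemma gmul_inv_r x : mul x (inv x) = one.
Proof.
  rewrite <- (gmul_1_l (mul x (inv x))), <- (gmul_inv_l (inv x)) at 1.
  rewrite <- gmul_assoc, (gmul_assoc (inv x) x (inv x)), gmul_inv_l, gmul_1_l. apply gmul_inv_l.
Qed.

Lemma gmul_1_r x : mul x one = x.
Proof. rewrite <- (gmul_inv_l x), gmul_assoc, gmul_inv_r, gmul_1_l. reflexivity. Qed.

Lemma gmul_cancel_l a b c : mul a b = mul a c -> b = c.
Proof.
  intros H. rewrite <- (gmul_1_l b), <- (gmul_1_l c), <- (gmul_inv_l a), <- !gmul_assoc, H.
  reflexivity.
Qed.

Lemma ginv_mul a b : inv (mul a b) = mul (inv b) (inv a).
Proof.
  apply (gmul_cancel_l (mul a b)). rewrite gmul_inv_r.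
  rewrite <- gmul_assoc, (gmul_assoc b (inv b)), gmul_inv_r, gmul_1_l, gmul_inv_r. reflexivity.
Qed.

Lemma ginv_involutive a : inv (inv a) = a.
Proof. apply (gmul_cancel_l (inv a)). rewrite gmul_inv_r, gmul_inv_l. reflexivity. Qed.

Lemma ginv_1 : inv one = one.
Proof. rewrite <- (gmul_1_l (inv one)). apply gmul_inv_r. Qed.

Lemma gmul_inv_mul_l a b : mul (inv a) (mul a b) = b.
Proof. rewrite gmul_assoc, gmul_inv_l, gmul_1_l. reflexivity. Qed.

Lemma gmul_mul_inv_l a b : mul a (mul (inv a) b) = b.
Proof. rewrite gmul_assoc, gmul_inv_r, gmul_1_l. reflexivity. Qed.

Lemma reach_weaken gens k k' g : reach mul inv one gens k g -> (k <= k')%nat ->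
  reach mul inv one gens k' g.
Proof. intros H Hk. induction Hk; [exact H|]. simpl. left. exact IHHk. Qed.

Lemma reach_mul gens k1 k2 a b : reach mul inv one gens k1 a -> reach mul inv one gens k2 b ->
  reach mul inv one gens (k1 + k2) (mul a b).
Proof.
  revert b. induction k2 as [|k2 IH]; intros b Ha Hb; simpl in Hb.
  - subst b. rewrite gmul_1_r, Nat.add_0_r. exact Ha.
  - rewrite Nat.add_succ_r. simpl. destruct Hb as [Hb|[s [y [Hs [Hy Eb]]]]].
    + left. apply IH; assumption.
    + right. exists s, (mul a y). split; [exact Hs|]. split; [apply IH; assumption|].
      destruct Eb as [->| ->]; [left|right]; apply gmul_assoc.
Qed.

Lemma reach_letter gens s : In s gens ->
  reach mul inv one gens 1 s /\ reach mul inv one gens 1 (inv s).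
Proof.
  intros Hs. split; simpl; right; exists s, one; (split; [exact Hs|]); (split; [reflexivity|]);
    [left|right]; rewrite gmul_1_l; reflexivity.
Qed.

Lemma reach_inv gens k a : reach mul inv one gens k a -> reach mul inv one gens k (inv a).
Proof.
  revert a. induction k as [|k IH]; intros a H; simpl in H.
  - subst a. simpl. apply ginv_1.
  - destruct H as [H|[s [y [Hs [Hy [-> | ->]]]]]].
    + simpl. left. apply IH. exact H.
    + rewrite ginv_mul. apply (reach_mul gens 1 k); [apply reach_letter, Hs|apply IH, Hy].
    + rewrite ginv_mul, ginv_involutive.
      apply (reach_mul gens 1 k); [apply reach_letter, Hs|apply IH, Hy].
Qed.

Lemma least_nat (P : nat -> Prop) :
  (exists k, P k) -> exists k, P k /\ forall j, P j -> (k <= j)%nat.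
Proof.
  intros [k Hk]. revert Hk. induction k as [k IH] using lt_wf_ind. intros Hk.
  destruct (classic (exists j, (j < k)%nat /\ P j)) as [[j [Hj Pj]]|Hnone].
  - exact (IH j Hj Pj).
  - exists k. split; [exact Hk|]. intros j Pj. destruct (le_lt_dec k j); [assumption|].
    exfalso. apply Hnone. eauto.
Qed.

Lemma word_length_exists (H : G -> Prop) gens g : generates mul inv one H gens -> H g ->
  exists k, is_wlen mul inv one gens g k.
Proof.
  intros [_ Hgen] Hg.
  destruct (least_nat (fun k => reach mul inv one gens k g) (Hgen g Hg)) as [k Hk].
  exists k. exact Hk.
Qed.

Lemma word_length_unique gens g k1 k2 :
  is_wlen mul inv one gens g k1 -> is_wlen mul inv one gens g k2 -> k1 = k2.
Proof. intros [A1 B1] [A2 B2]. specialize (B1 k2 A2). specialize (B2 k1 A1). lia. Qed.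

Section LengthFunction.
Variables (n : nat) (l : G -> vec) (delta : vec).
Hypothesis Hlf : length_function mul inv one n l.
Hypothesis Hreg : regular_lf mul inv n l delta.
Hypothesis Hhyp : hyperbolic_lf mul inv n l delta.
Hypothesis Hht : ht n delta = 1%nat.
Hypothesis Hprop : proper_lf n l.

Definition G1 (g : G) : Prop := (ht n (l g) <= 1)%nat.
Hypothesis Hsub : is_subgroup mul inv one G1.

Lemma n_pos : (1 <= n)%nat.
Proof. destruct n; [discriminate Hht|lia]. Qed.

Lemma G1_one : G1 one.
Proof. apply Hsub. Qed.

Lemma G1_mul x y : G1 x -> G1 y -> G1 (mul x y).
Proof. apply Hsub. Qed.

Lemma G1_inv x : G1 x -> G1 (inv x).
Proof. apply Hsub. Qed.

Lemma G1_flat g : G1 g -> flat n (l g).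
Proof. apply ht_le_1_flat. Qed.

Definition L (g : G) : Z := l g 0%nat.

Lemma L_one : L one = 0.
Proof. destruct Hlf as [H _]. apply H, n_pos. Qed.

Lemma L_inv g : L (inv g) = L g.
Proof. destruct Hlf as [_ [_ [H _]]]. apply H, n_pos. Qed.

Lemma L_nonneg g : G1 g -> 0 <= L g.
Proof.
  intros Hg. destruct Hlf as [_ [H _]].
  apply (vle_flat n vzero (l g) n_pos (flat_vzero n) (G1_flat g Hg)), H.
Qed.

Lemma L_mul_le g h : G1 g -> G1 h -> L (mul g h) <= L g + L h.
Proof.
  intros Hg Hh. destruct Hlf as [_ [_ [_ H]]].
  apply (vle_flat n _ _ n_pos (G1_flat _ (G1_mul _ _ Hg Hh))
    (flat_vadd _ _ _ (G1_flat _ Hg) (G1_flat _ Hh))).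
  apply H.
Qed.

Definition c2L (f g : G) : Z := L f + L g - L (mul (inv f) g).

Lemma flat_c2 f g : G1 f -> G1 g -> flat n (c2 mul inv l f g).
Proof.
  intros Hf Hg. apply flat_vsub; [apply flat_vadd|]; apply G1_flat; auto.
  apply G1_mul; [apply G1_inv|]; assumption.
Qed.

Lemma c2L_hyperbolic f g h : G1 f -> G1 g -> G1 h ->
  Z.min (c2L f h) (c2L g h) - 2 * delta 0%nat <= c2L f g.
Proof.
  intros Hf Hg Hh.
  assert (Hdelta : flat n delta) by (apply ht_le_1_flat; lia).
  destruct (vmin_flat n _ _ n_pos (flat_c2 f h Hf Hh) (flat_c2 g h Hg Hh)) as [Fmin Emin].
  pose proof (Hhyp f g h) as H.
  apply (vle_flat n _ _ n_pos (flat_vsub _ _ _ Fmin (flat_vscal _ _ _ Hdelta)) (flat_c2 f g Hf Hg))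
    in H.
  unfold vsub at 1, vscal in H. rewrite Emin in H. exact H.
Qed.

(* Regularity splits [g] at the point of a geodesic [1 -> g] where it leaves [1 -> h]. *)
Lemma c2L_regular g h : G1 g -> G1 h ->
  exists gc, G1 gc /\ 2 * L gc = c2L g h /\ L gc + L (mul (inv gc) g) = L g.
Proof.
  intros Hg Hh. destruct (Hreg g h) as [gc [hc [gd [hd [Egc [_ [-> [_ [Eg _]]]]]]]]].
  pose proof (flat_c2 _ _ Hg Hh) as Fc.
  assert (Fgc : flat n (l gc)).
  { intros i Hi1 Hi2. specialize (Egc i Hi2). rewrite (Fc i Hi1 Hi2) in Egc.
    unfold vscal in Egc. lia. }
  exists gc. split; [apply ht_le_1_flat, Fgc|].
  rewrite gmul_inv_mul_l. specialize (Egc 0%nat n_pos). specialize (Eg 0%nat n_pos).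
  unfold vscal, c2, vsub, vadd in *. unfold c2L, L. split; lia.
Qed.

Section Words.
Variable gens : list G.
Hypothesis HS : forall s, In s gens -> G1 s.

Lemma reach_G1 k g : reach mul inv one gens k g -> G1 g.
Proof.
  revert g. induction k as [|k IH]; simpl; intros g H.
  - subst g. apply G1_one.
  - destruct H as [H|[s [y [Hs [Hy [-> | ->]]]]]]; auto; apply G1_mul; auto. apply G1_inv; auto.
Qed.

Lemma reach_L_le MS : 0 <= MS -> (forall s, In s gens -> L s <= MS) ->
  forall k g, reach mul inv one gens k g -> L g <= MS * Z.of_nat k.
Proof.
  intros HMS0 HMS. induction k as [|k IH]; intros g H; simpl in H.
  - subst g. rewrite L_one. lia.
  - rewrite Nat2Z.inj_succ. destruct H as [H|[s [y [Hs [Hy [-> | ->]]]]]].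
    + specialize (IH g H). nia.
    + pose proof (L_mul_le y s (reach_G1 k y Hy) (HS s Hs)). specialize (IH y Hy).
      specialize (HMS s Hs). nia.
    + pose proof (L_mul_le y (inv s) (reach_G1 k y Hy) (G1_inv _ (HS s Hs))). rewrite L_inv in *.
      specialize (IH y Hy). specialize (HMS s Hs). nia.
Qed.

Lemma c2L_mul_le g y t : G1 g -> G1 y -> G1 t -> c2L g (mul y t) <= c2L g y + 2 * L t.
Proof.
  intros Hg Hy Ht. unfold c2L.
  pose proof (L_mul_le y t Hy Ht).
  pose proof (L_mul_le (mul (inv g) (mul y t)) (inv t)
    (G1_mul _ _ (G1_inv _ Hg) (G1_mul _ _ Hy Ht)) (G1_inv _ Ht)).
  rewrite <- !gmul_assoc, gmul_inv_r, gmul_1_r, L_inv in *. lia.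
Qed.

(* Along a word for [h], [c2L g] grows in steps of at most [2 MS]. *)
Lemma c2L_intermediate MS g : (forall s, In s gens -> L s <= MS) -> G1 g ->
  forall k h, reach mul inv one gens k h -> 2 <= c2L g h ->
  exists h', G1 h' /\ 2 <= c2L g h' <= 2 * MS + 1.
Proof.
  intros HMS Hg. induction k as [|k IH]; intros h Hh Hc; simpl in Hh.
  - subst h. unfold c2L in Hc. rewrite gmul_1_r, L_one, L_inv in Hc. lia.
  - destruct Hh as [Hh|[s [y [Hs [Hy Eh]]]]]; [exact (IH h Hh Hc)|].
    destruct (Z_le_gt_dec 2 (c2L g y)) as [Hy2|Hy2]; [exact (IH y Hy Hy2)|].
    assert (Ht : exists t, G1 t /\ L t <= MS /\ h = mul y t).
    { specialize (HMS s Hs). pose proof (HS s Hs).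
      destruct Eh as [-> | ->]; [exists s|exists (inv s)]; rewrite ?L_inv; auto using G1_inv. }
    destruct Ht as [t [Gt [Lt ->]]]. pose proof (reach_G1 k y Hy) as Gy.
    exists (mul y t). split; [apply G1_mul; assumption|].
    pose proof (c2L_mul_le g y t Hg Gy Gt). lia.
Qed.

End Words.

Lemma list_L_bound (Lst : list G) : exists MS, 1 <= MS /\ forall s, In s Lst -> G1 s -> L s <= MS.
Proof.
  induction Lst as [|a t [MS [H1 H2]]].
  - exists 1. split; [lia|]. intros s [].
  - exists (Z.max MS (L a)). split; [lia|]. intros s [->|Hs] Gs; [lia|].
    specialize (H2 s Hs Gs). lia.
Qed.

Lemma list_reach_bound (gens Lst : list G) : generates mul inv one G1 gens ->
  exists W, forall g, In g Lst -> G1 g -> reach mul inv one gens W g.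
Proof.
  intros [_ Hgen]. induction Lst as [|a t [W HW]].
  - exists 0%nat. intros g [].
  - destruct (classic (G1 a)) as [Ga|Ga].
    + destruct (Hgen a Ga) as [ka Hka]. exists (Nat.max W ka). intros g [<-|Hg] Gg.
      * apply (reach_weaken gens ka); [exact Hka|lia].
      * apply (reach_weaken gens W); [auto|lia].
    + exists W. intros g [<-|Hg] Gg; [contradiction|auto].
Qed.

Section Generated.
Variable gens : list G.
Hypothesis HgenS : generates mul inv one G1 gens.

Lemma generators_in_G1 s : In s gens -> G1 s.
Proof. apply HgenS. Qed.

Lemma L_split : exists M0, 1 <= M0 /\ forall g, G1 g -> 1 <= L g ->
  exists a, G1 a /\ L a + L (mul (inv a) g) = L g /\ 1 <= L a <= M0.
Proof.
  destruct (list_L_bound gens) as [M0 [HM0 HB]].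
  exists M0. split; [exact HM0|]. intros g Hg Hg1.
  destruct (proj2 HgenS g Hg) as [k Hk].
  destruct (c2L_intermediate gens generators_in_G1 M0 g
    (fun s Hs => HB s Hs (generators_in_G1 s Hs)) Hg k g Hk) as [h [Hh Hc]].
  { unfold c2L. rewrite gmul_inv_l, L_one. lia. }
  destruct (c2L_regular g h Hg Hh) as [a [Ga [E1 E2]]].
  exists a. split; [exact Ga|]. split; [exact E2|lia].
Qed.

Lemma L_le_word_length : exists MS, 1 <= MS /\
  forall g k, is_wlen mul inv one gens g k -> L g <= MS * Z.of_nat k.
Proof.
  destruct (list_L_bound gens) as [MS [HMS HB]]. exists MS. split; [exact HMS|].
  intros g k [Hk _]. apply (reach_L_le gens generators_in_G1 MS); [lia| |exact Hk].
  intros s Hs. exact (HB s Hs (generators_in_G1 s Hs)).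
Qed.

(* Properness makes the pieces of [L]-size at most [M0] finitely many, hence of bounded word
   length; splitting them off one at a time gives a word of length linear in [L]. *)
Lemma reach_linear_in_L : exists W : nat, (1 <= W)%nat /\
  forall g, G1 g -> reach mul inv one gens (W * (Z.to_nat (L g) + 1)) g.
Proof.
  destruct L_split as [M0 [HM0 Hsplit]].
  destruct (Hprop (Z.to_nat M0)) as [Lst HL].
  destruct (list_reach_bound gens Lst HgenS) as [W0 HW0].
  assert (Hsmall : forall g, G1 g -> L g <= M0 -> reach mul inv one gens W0 g).
  { intros g Gg Hg. apply HW0; [|exact Gg]. apply HL.
    apply (vle_flat n _ _ n_pos (G1_flat g Gg) (flat_e1 n _)). unfold e1, L in *. lia. }
  exists (S W0). split; [lia|].
  assert (Hind : forall N g, G1 g -> L g <= Z.of_nat N ->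
    reach mul inv one gens (S W0 * (N + 1)) g).
  { induction N as [|N IH]; intros g Gg Hg.
    - apply (reach_weaken gens W0); [apply Hsmall; auto; lia|lia].
    - destruct (Z_le_gt_dec (L g) 0) as [H0|H0].
      + apply (reach_weaken gens W0); [apply Hsmall; auto; lia|nia].
      + destruct (Hsplit g Gg ltac:(lia)) as [a [Ga [E1 E2]]].
        assert (Gb : G1 (mul (inv a) g)) by (apply G1_mul; [apply G1_inv|]; assumption).
        pose proof (reach_mul gens _ _ _ _ (Hsmall a Ga ltac:(lia))
          (IH (mul (inv a) g) Gb ltac:(lia))) as Hr.
        rewrite gmul_mul_inv_l in Hr. apply (reach_weaken gens _ _ _ Hr). nia. }
  intros g Gg. apply Hind; [exact Gg|]. pose proof (L_nonneg g Gg). lia.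
Qed.

Lemma word_length_le_L : exists W, 1 <= W /\
  forall g k, G1 g -> is_wlen mul inv one gens g k -> Z.of_nat k <= W * L g + W.
Proof.
  destruct reach_linear_in_L as [W [HW HWg]]. exists (Z.of_nat W). split; [lia|].
  intros g k Hg [_ Hmin]. specialize (Hmin _ (HWg g Hg)). pose proof (L_nonneg g Hg).
  apply Nat2Z.inj_le in Hmin. rewrite Nat2Z.inj_mul, Nat2Z.inj_add, Z2Nat.id in Hmin by lia. lia.
Qed.

Lemma G1_quasi_isometric : quasi_isometric_word mul inv one G1 gens (dl mul inv l).
Proof.
  destruct L_le_word_length as [MS [HMS Hlow]].
  destruct word_length_le_L as [W [HW Hup]].
  exists (fun x => x), (Z.max MS W), W. split; [lia|]. split; [lia|]. split; [auto|]. split.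
  - intros x y k Hx Hy Hk. unfold dl. fold (L (mul (inv x) y)).
    assert (Hxy : G1 (mul (inv x) y)) by (apply G1_mul; [apply G1_inv|]; assumption).
    specialize (Hlow _ _ Hk). specialize (Hup _ _ Hxy Hk). pose proof (L_nonneg _ Hxy).
    assert (MS * Z.of_nat k <= Z.max MS W * Z.of_nat k) by (apply Z.mul_le_mono_nonneg_r; lia).
    assert (W * L (mul (inv x) y) <= Z.max MS W * L (mul (inv x) y))
      by (apply Z.mul_le_mono_nonneg_r; lia).
    lia.
  - intros y Hy. exists y. split; [exact Hy|]. unfold dl. fold (L (mul (inv y) y)).
    rewrite gmul_inv_l, L_one. lia.
Qed.

End Generated.

Definition G1T : Type := {g : G | G1 g}.

Lemma G1T_eq (a b : G1T) : proj1_sig a = proj1_sig b -> a = b.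
Proof. destruct a as [a Ha], b as [b Hb]. simpl. intros <-. f_equal. apply proof_irrelevance. Qed.

Definition ldiv (x y : G1T) : G := mul (inv (proj1_sig x)) (proj1_sig y).

Lemma G1_ldiv x y : G1 (ldiv x y).
Proof. destruct x as [x Hx], y as [y Hy]. apply G1_mul; [apply G1_inv|]; assumption. Qed.

Lemma ldiv_diag x : ldiv x x = one.
Proof. apply gmul_inv_l. Qed.

Lemma ldiv_inv x y : inv (ldiv x y) = ldiv y x.
Proof. unfold ldiv. rewrite ginv_mul, ginv_involutive. reflexivity. Qed.

Lemma ldiv_mul x y z : mul (ldiv x y) (ldiv y z) = ldiv x z.
Proof. unfold ldiv. rewrite <- gmul_assoc, gmul_mul_inv_l. reflexivity. Qed.

Definition d1 (x y : G1T) : Z := L (ldiv x y).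

Lemma d1_refl x : d1 x x = 0.
Proof. unfold d1. rewrite ldiv_diag. apply L_one. Qed.

Lemma d1_sym x y : d1 x y = d1 y x.
Proof. unfold d1. rewrite <- L_inv, ldiv_inv. reflexivity. Qed.

Lemma d1_triangle x y z : d1 x z <= d1 x y + d1 y z.
Proof. unfold d1. rewrite <- (ldiv_mul x y z). apply L_mul_le; apply G1_ldiv. Qed.

Lemma d1_hyperbolic w a b c : Z.min (gromov G1T d1 w a b) (gromov G1T d1 w b c)
  - Z.max 0 (2 * delta 0%nat) <= gromov G1T d1 w a c.
Proof.
  pose proof (c2L_hyperbolic _ _ _ (G1_ldiv w a) (G1_ldiv w c) (G1_ldiv w b)) as H.
  unfold c2L in H. rewrite !ldiv_inv, !ldiv_mul in H.
  pose proof (d1_sym c b). unfold gromov, d1 in *. lia.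
Qed.

Section WordMetric.
Variable gens : list G.
Hypothesis HgenS : generates mul inv one G1 gens.

Definition word_length (g : G) (Hg : G1 g) : nat :=
  proj1_sig (constructive_indefinite_description _ (word_length_exists G1 gens g HgenS Hg)).

Lemma word_length_spec g Hg : is_wlen mul inv one gens g (word_length g Hg).
Proof.
  unfold word_length. destruct (constructive_indefinite_description _ _) as [k Hk]. exact Hk.
Qed.

Definition dS (x y : G1T) : Z := Z.of_nat (word_length _ (G1_ldiv x y)).

Lemma dS_eq x y k : is_wlen mul inv one gens (ldiv x y) k -> dS x y = Z.of_nat k.
Proof.
  intros Hk. unfold dS. f_equal. eapply word_length_unique; [apply word_length_spec|exact Hk].
Qed.

Lemma dS_le x y k : reach mul inv one gens k (ldiv x y) -> dS x y <= Z.of_nat k.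
Proof.
  intros Hk. unfold dS. destruct (word_length_spec _ (G1_ldiv x y)) as [_ Hmin].
  specialize (Hmin k Hk). lia.
Qed.

Lemma dS_reach x y : reach mul inv one gens (Z.to_nat (dS x y)) (ldiv x y).
Proof. unfold dS. rewrite Nat2Z.id. apply word_length_spec. Qed.

Lemma dS_nonneg x y : 0 <= dS x y.
Proof. unfold dS. lia. Qed.

Lemma dS_refl x : dS x x = 0.
Proof.
  assert (H : reach mul inv one gens 0 (ldiv x x)) by apply ldiv_diag.
  pose proof (dS_le x x 0 H). pose proof (dS_nonneg x x). lia.
Qed.

Lemma dS_sym x y : dS x y = dS y x.
Proof.
  enough (H : forall x y, dS y x <= dS x y) by (pose proof (H x y); pose proof (H y x); lia).
  clear x y. intros x y. pose proof (reach_inv _ _ _ (dS_reach x y)) as H.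
  rewrite ldiv_inv in H. apply dS_le in H. pose proof (dS_nonneg x y). lia.
Qed.

Lemma dS_triangle x y z : dS x z <= dS x y + dS y z.
Proof.
  pose proof (reach_mul gens _ _ _ _ (dS_reach x y) (dS_reach y z)) as H.
  rewrite ldiv_mul in H. apply dS_le in H.
  pose proof (dS_nonneg x y). pose proof (dS_nonneg y z). lia.
Qed.

Lemma reach_path k g : reach mul inv one gens k g ->
  forall x : G1T, exists (j : nat) (v : nat -> G1T),
  (j <= k)%nat /\ v 0%nat = x /\ proj1_sig (v j) = mul (proj1_sig x) g /\
  forall i, (i < j)%nat -> dS (v i) (v (S i)) <= 1.
Proof.
  revert g. induction k as [|k IH]; intros g Hg x; simpl in Hg.
  - subst g. exists 0%nat, (fun _ => x). rewrite gmul_1_r. repeat split; [lia|]. intros i Hi. lia.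
  - destruct Hg as [Hg|[s [y [Hs [Hy Eg]]]]].
    + destruct (IH g Hg x) as [j [v [Hj Hv]]]. exists j, v. split; [lia|exact Hv].
    + destruct (IH y Hy x) as [j [v [Hj [V0 [Vj Vsteps]]]]].
      assert (Gg : G1 (mul (proj1_sig x) g)).
      { apply G1_mul; [apply (proj2_sig x)|]. apply (reach_G1 gens (proj1 HgenS) (S k)).
        simpl. right. exists s, y. auto. }
      set (p := exist G1 (mul (proj1_sig x) g) Gg : G1T).
      exists (S j), (fun i => if Nat.eqb i (S j) then p else v i).
      split; [lia|]. split; [exact V0|]. split; [rewrite Nat.eqb_refl; reflexivity|].
      intros i Hi. destruct (Nat.eqb_spec i (S j)) as [|_]; [lia|].
      destruct (Nat.eqb_spec (S i) (S j)) as [Eij|]; [|apply Vsteps; lia].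
      replace i with j by lia. apply (dS_le _ _ 1). unfold ldiv. rewrite Vj. simpl proj1_sig.
      rewrite ginv_mul, <- gmul_assoc, gmul_inv_mul_l.
      destruct Eg as [-> | ->]; rewrite gmul_assoc, gmul_inv_l, gmul_1_l; apply reach_letter, Hs.
Qed.

Lemma dS_path x y : exists (j : nat) (v : nat -> G1T), Z.of_nat j <= dS x y /\
  v 0%nat = x /\ v j = y /\ forall i, (i < j)%nat -> dS (v i) (v (S i)) <= 1.
Proof.
  destruct (reach_path _ _ (dS_reach x y) x) as [j [v [Hj [V0 [Vj Vsteps]]]]].
  exists j, v. pose proof (dS_nonneg x y). split; [lia|]. split; [exact V0|].
  split; [|exact Vsteps]. apply G1T_eq. rewrite Vj. apply gmul_mul_inv_l.
Qed.

Lemma d1_coarse_geodesic : exists M0, 1 <= M0 /\ forall x y, 1 <= d1 x y ->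
  exists z, d1 x z + d1 z y = d1 x y /\ 1 <= d1 x z <= M0.
Proof.
  destruct (L_split gens HgenS) as [M0 [HM0 Hsplit]]. exists M0. split; [exact HM0|].
  intros x y Hxy. destruct (Hsplit _ (G1_ldiv x y) Hxy) as [a [Ga [E1 E2]]].
  assert (Gz : G1 (mul (proj1_sig x) a)) by (apply G1_mul; [apply (proj2_sig x)|exact Ga]).
  exists (exist G1 (mul (proj1_sig x) a) Gz). unfold d1, ldiv in *. simpl.
  rewrite gmul_inv_mul_l, ginv_mul, <- gmul_assoc. split; [exact E1|exact E2].
Qed.

Lemma word_hyperbolic_G1_wrt : word_hyperbolic_wrt mul inv one G1 gens.
Proof.
  destruct d1_coarse_geodesic as [M0 [HM0 Hsplit]].
  destruct (L_le_word_length gens HgenS) as [MS [HMS Hlow]].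
  destruct (word_length_le_L gens HgenS) as [W [HW Hup]].
  destruct (dw_hyperbolic G1T d1 dS (Z.max 0 (2 * delta 0%nat)) (Z.max M0 MS) W
    ltac:(lia) ltac:(lia) HW d1_refl d1_sym d1_triangle d1_hyperbolic) as [D [HD HypD]].
  - intros x y Hxy. destruct (Hsplit x y Hxy) as [z Hz]. exists z. lia.
  - exact dS_refl.
  - exact dS_sym.
  - exact dS_triangle.
  - exact dS_path.
  - intros x y. specialize (Hlow _ _ (word_length_spec _ (G1_ldiv x y))).
    pose proof (dS_nonneg x y). unfold d1, dS. fold (dS x y) in *.
    assert (MS * dS x y <= Z.max M0 MS * dS x y) by (apply Z.mul_le_mono_nonneg_r; lia). lia.
  - intros x y. specialize (Hup _ _ (G1_ldiv x y) (word_length_spec _ (G1_ldiv x y))).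
    unfold d1, dS. lia.
  - exists (Z.to_nat D). intros w x y z Hw Hx Hy Hz dwx dwy dwz dxy dyz dxz H1 H2 H3 H4 H5 H6.
    set (w' := exist G1 w Hw : G1T). set (x' := exist G1 x Hx : G1T).
    set (y' := exist G1 y Hy : G1T). set (z' := exist G1 z Hz : G1T).
    specialize (HypD w' x' y' z').
    rewrite (dS_eq w' x' dwx H1), (dS_eq w' y' dwy H2), (dS_eq w' z' dwz H3),
      (dS_eq x' y' dxy H4), (dS_eq y' z' dyz H5), (dS_eq x' z' dxz H6) in HypD.
    lia.
Qed.

End WordMetric.

Lemma word_hyperbolic_G1 : fin_generated mul inv one G1 -> word_hyperbolic mul inv one G1.
Proof.
  intros [gens Hgens]. exists gens. split; [exact Hgens|]. apply word_hyperbolic_G1_wrt, Hgens.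
Qed.

End LengthFunction.
End Group.

(* Torsion-freeness of [G1] is inherited from [G]. *)
Theorem lemma3p10 (G : Type) (mul : G -> G -> G) (inv : G -> G) (one : G)
  (n : nat) (l : G -> vec) (delta : vec) :
  is_group mul inv one ->
  fin_generated mul inv one (fun _ => True) ->
  torsion_free mul one (fun _ => True) ->
  length_function mul inv one n l ->
  proper_lf n l ->
  regular_lf mul inv n l delta ->
  hyperbolic_lf mul inv n l delta ->
  ht n delta = 1%nat ->
  let G1 := fun g => (ht n (l g) <= 1)%nat in
  is_subgroup mul inv one G1 ->
  fin_generated mul inv one G1 ->
  isolated mul inv one G1 ->
  torsion_free mul one G1 /\
  word_hyperbolic mul inv one G1 /\
  (forall S, generates mul inv one G1 S ->
     quasi_isometric_word mul inv one G1 S (dl mul inv l)).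
Proof.
  intros Hgrp _ Htf Hlf Hprop Hreg Hhyp Hht G1 Hsub Hfg1 _.
  split; [|split].
  - intros g _. exact (Htf g I).
  - exact (word_hyperbolic_G1 mul inv one Hgrp n l delta Hlf Hreg Hhyp Hht Hprop Hsub Hfg1).
  - exact (G1_quasi_isometric mul inv one Hgrp n l delta Hlf Hreg Hhyp Hht Hprop Hsub).
Qed.
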